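(* The dimension of $\sigma_r(\mathcal{M}_{n,d})$ is bounded above by the optimal value of the following integer linear program in the variables $c_1,\ldots,c_d\in\mathbb{Z}$: $$\text{maximize } c_1+c_2+\cdots+c_d-1$$ subject to $$0\le c_i\le nr\ \text{ for } i\in[d],\qquad \sum_{i\in S}c_i\le\sum_{\lambda\cap S\neq\emptyset}|N_\lambda|\ \text{ for all } S\subseteq[d].$$ Here the last sum ranges over the partitions $\lambda$ of $d$ of length at most $n$ having at least one part lying in $S$.
   Context: Work over $\mathbb{C}$. Let $[d]=\{1,\ldots,d\}$. The variety $\sigma_r(\mathcal{M}_{n,d})\subset\mathbb{P}^{\binom{n+d-1}{d}-1}$ is the Zariski closure of the image of $m_{i_1\cdots i_n}=\sum_{j=1}^r\mu^{(j)}_{1i_1}\cdots\mu^{(j)}_{ni_n}$ over all $(i_1,\ldots,i_n)\in\mathbb{Z}_{\ge0}^n$ with $\sum_k i_k=d$, with $\mu^{(j)}_{k0}=1$. For a partition $\lambda$ of $d$ with at most $n$ parts, $N_\lambda$ is the set of index vectors $(i_1,\ldots,i_n)\in\mathbb{Z}_{\ge 0}^n$ whose multiset of nonzero entries equals $\lambda$. *)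

From HB Require Import structures.
From mathcomp Require Import all_boot all_order all_algebra.
From mathcomp Require Import mpoly.
From Stdlib Require Import ClassicalDescription.
Set Implicit Arguments. Unset Strict Implicit. Unset Printing Implicit Defensive.
Import Order.TTheory GRing.Theory Num.Theory.
Local Open Scope ring_scope.

(* Index vectors (i_1,...,i_n) in Z_{>=0}^n with i_1+...+i_n = d.
   Entries are bounded by d, so they are encoded as 'I_n -> 'I_d.+1. *)
Definition idxvec (n d : nat) := {ffun 'I_n -> 'I_d.+1}.

Definition is_index (n d : nat) (a : idxvec n d) : bool :=
  (\sum_(k < n) (a k : nat) == d)%N.

Definition coords (n d : nat) : {set idxvec n d} := [set a | is_index a].

(* Parameters: x j k i stands for mu^{(j)}_{k i} (j in [r], k in [n], i in [0..d]);
   the entry i = 0 is not used: mu^{(j)}_{k0} = 1. *)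
Definition params (C : Type) (r n d : nat) := 'I_r -> 'I_n -> 'I_d.+1 -> C.

Definition mu (C : numClosedFieldType) r n d (x : params C r n d)
  (j : 'I_r) (k : 'I_n) (i : 'I_d.+1) : C :=
  if i == ord0 then 1 else x j k i.

Definition mcoord (C : numClosedFieldType) r n d (a : idxvec n d)
  (x : params C r n d) : C :=
  \sum_(j < r) \prod_(k < n) mu x j k (a k).

Definition alg_indep (C : numClosedFieldType) r n d (S : {set idxvec n d}) : Prop :=
  forall P : {mpoly C[#|S|]},
    (forall x : params C r n d,
        P.@[fun i : 'I_#|S| => mcoord (enum_val i) x] = 0) -> P = 0.

Definition alg_indepb (C : numClosedFieldType) r n d (S : {set idxvec n d}) : bool :=
  if excluded_middle_informative (@alg_indep C r n d S) then true else false.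

(* Dimension of the affine cone = transcendence degree over C of the field
   generated by the coordinate functions = maximal number of algebraically
   independent coordinates.  The projective dimension of sigma_r(M_{n,d})
   is one less (the image is a cone since d > 0). *)
Definition sigma_dim (C : numClosedFieldType) (n d r : nat) : int :=
  (\max_(S : {set idxvec n d} | (S \subset coords n d) && @alg_indepb C r n d S) #|S|)%:Z - 1.

(* Partitions of d with at most n parts, encoded as nonincreasing n-tuples
   (padded with zeros) of naturals summing to d; the parts are the nonzero entries. *)
Definition is_partition (n d : nat) (l : idxvec n d) : bool :=
  is_index l && [forall k : 'I_n, forall k' : 'I_n, (k <= k')%N ==> (l k' <= l k)%N].

Definition nonzero_entries (n d : nat) (a : idxvec n d) : seq nat :=
  [seq (a k : nat) | k <- enum 'I_n & (a k != ord0)].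

Definition Nset (n d : nat) (l : idxvec n d) : {set idxvec n d} :=
  [set a | perm_eq (nonzero_entries a) (nonzero_entries l)].

(* lambda has a part lying in S, where S is a subset of [d] and the
   ordinal i : 'I_d represents the element i+1 of [d]. *)
Definition meets (n d : nat) (l : idxvec n d) (S : {set 'I_d}) : bool :=
  [exists k : 'I_n, [exists i in S, (i : nat).+1 == l k]].

(* Feasibility for the ILP; c : 'I_d -> 'I_(n*r).+1 encodes 0 <= c_i <= nr. *)
Definition ilp_feasible (n d r : nat) (c : {ffun 'I_d -> 'I_(n * r).+1}) : bool :=
  [forall S : {set 'I_d},
     (\sum_(i in S) (c i : nat) <=
      \sum_(l : idxvec n d | is_partition l && meets l S) #|Nset l|)%N].

Definition ilp_opt (n d r : nat) : int :=
  (\max_(c : {ffun 'I_d -> 'I_(n * r).+1} | @ilp_feasible n d r c)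
      \sum_(i < d) (c i : nat))%:Z - 1.

From HB Require Import structures.
From mathcomp Require Import all_boot all_order all_algebra.
From mathcomp Require Import mpoly zify.
From Stdlib Require Import ClassicalDescription.
Set Implicit Arguments. Unset Strict Implicit. Unset Printing Implicit Defensive.
Import Order.TTheory GRing.Theory Num.Theory.

(* If the coordinates m_a, a in T, are algebraically independent, then so are those
   with a in any U included in T.  These are polynomials in the n r |P(U)| parameters
   mu^{(j)}_{k,i} with i in the set P(U) of parts of the index vectors in U, and more
   than N polynomials in N variables are algebraically dependent (their power products
   outnumber the monomials of bounded degree).  Hence |U| <= n r |P(U)|, which is Hall's
   condition for assigning to every a in T one of its parts so that each part is used at
   most n r times.  Letting c_i count the vectors assigned to part i gives a feasible
   point with c_1 + ... + c_d = |T|: the vectors assigned into S have a part in S, so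
   they lie in sets N_lambda with lambda meeting S. *)

Section CapacitatedHall.
Local Open Scope nat_scope.
Variables (A I : finType) (V : A -> {set I}).
Implicit Types (T U X : {set A}) (kap : I -> nat).

Definition nbhd U : {set I} := \bigcup_(a in U) V a.

Definition hall_cond kap T : Prop :=
  forall U, U \subset T -> #|U| <= \sum_(i in nbhd U) kap i.

Definition assignment kap T (g : A -> I) : Prop :=
  {in T, forall a, g a \in V a} /\ forall i, #|[set a in T | g a == i]| <= kap i.

Lemma nbhdS X U : X \subset U -> nbhd X \subset nbhd U.
Proof.
move=> sXU; apply/subsetP=> i /bigcupP[a aX iVa].
by apply/bigcupP; exists a; first exact: subsetP sXU a aX.
Qed.

Lemma hall_cond_restrict kap T U : hall_cond kap T -> U \subset T ->
  hall_cond (fun i => if i \in nbhd U then kap i else 0) U.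
Proof.
move=> hT sUT X sXU; rewrite (eq_bigr kap) ?hT //; first exact: subset_trans sUT.
by move=> i /(subsetP (nbhdS sXU)) ->.
Qed.

Lemma hall_cond_contract kap T U : hall_cond kap T -> U \subset T ->
  #|U| = \sum_(i in nbhd U) kap i ->
  hall_cond (fun i => if i \in nbhd U then 0 else kap i) (T :\: U).
Proof.
move=> hT sUT tightU X sXTU.
have sXT : X \subset T := subset_trans sXTU (subsetDl T U).
have disjXU : X :&: U = set0.
  apply/setP=> a; rewrite !inE; apply/negP=> /andP[/(subsetP sXTU)].
  by rewrite inE => /andP[/negPf ->].
have := hT (X :|: U); rewrite subUset sXT sUT => /(_ isT).
rewrite -(leq_add2r #|X :&: U|) cardsUI disjXU cards0 addn0.
have -> : nbhd (X :|: U) = nbhd X :|: nbhd U by exact: bigcup_setU.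
rewrite (big_setID (A := nbhd X :|: nbhd U) (nbhd U)) setIC setKU.
rewrite setDUl setDv setU0 -tightU [#|X| + _]addnC leq_add2l => /leq_trans; apply.
rewrite [leqLHS]big_mkcond [leqRHS]big_mkcond; apply: leq_sum => i _.
by rewrite inE; case: (i \in nbhd U).
Qed.

Lemma hall_cond_remove kap T a i : hall_cond kap T ->
  (forall U, U != set0 -> U \proper T -> #|U| != \sum_(j in nbhd U) kap j) ->
  a \in T -> hall_cond (fun j => kap j - (j == i)) (T :\ a).
Proof.
move=> hT loose aT X sXTa; have [-> | [b bX]] := set_0Vmem X; first by rewrite cards0.
have ltXT : X \proper T := sub_proper_trans sXTa (properD1 aT).
have X0 : X != set0 by apply/set0Pn; exists b.
have ltX : #|X| < \sum_(j in nbhd X) kap j by rewrite ltn_neqAle loose ?hT ?proper_sub.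
rewrite -ltnS (leq_trans ltX) // -addn1.
apply: (@leq_trans (\sum_(j in nbhd X) ((kap j - (j == i)) + (j == i)))).
  by apply: leq_sum => j _; lia.
rewrite big_split leq_add2l.
apply: (@leq_trans (\sum_(j : I) (j == i : nat))).
  by rewrite [leqRHS](bigID (mem (nbhd X))) leq_addr.
by rewrite (bigD1 i) //= eqxx big1 // => j /negPf ->.
Qed.

Lemma assignment0 kap (g : A -> I) : assignment kap set0 g.
Proof.
split=> [a | i]; first by rewrite inE.
by rewrite (_ : [set a in set0 | _] = set0) ?cards0 //; apply/setP=> a; rewrite !inE.
Qed.

Lemma assignment1 a i : i \in V a -> assignment (fun j => j == i : nat) [set a] (fun _ => i).
Proof.
move=> iVa; split=> [b /set1P -> // | j].
have [_ | _] := eqVneq i j; last first.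
  by rewrite leqn0 cards_eq0; apply/eqP/setP=> b; rewrite !inE andbF.
apply: (@leq_trans #|[set a]|); last by rewrite cards1.
by apply: subset_leq_card; apply/subsetP=> b; rewrite inE => /andP[].
Qed.

Lemma assignment_glue kap1 kap2 kap U X (g1 g2 : A -> I) :
  assignment kap1 U g1 -> assignment kap2 X g2 -> (forall i, kap1 i + kap2 i <= kap i) ->
  assignment kap (U :|: X) (fun a => if a \in U then g1 a else g2 a).
Proof.
move=> [g1V g1c] [g2V g2c] le_kap; split=> [a | i].
  case: ifPn => aU aUX; first exact: g1V.
  by apply: g2V; case/setUP: aUX aU => [-> | ].
apply: leq_trans (le_kap i); apply: leq_trans (leq_add (g1c i) (g2c i)).
apply: leq_trans (leq_card_setU _ _); apply/subset_leq_card/subsetP=> a.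
by rewrite !inE; case: (a \in U) => //= ->.
Qed.

Lemma capacitated_hall (i0 : I) kap T : hall_cond kap T -> exists g, assignment kap T g.
Proof.
(* Induction on #|T|: split T along a tight proper subset if there is one; otherwise
   any element may take any of its parts of positive capacity. *)
elim: {T}_.+1 {-2}T (ltnSn #|T|) kap => [|m IH] T // leTm kap hT.
have [/existsP[U /and3P[U0 ltUT /eqP tightU]] | /existsPn loose] := boolP
  [exists U, [&& U != set0, U \proper T & #|U| == \sum_(i in nbhd U) kap i]].
  have sUT := proper_sub ltUT.
  have [g1 hg1] := IH U (leq_trans (proper_card ltUT) leTm) _ (hall_cond_restrict hT sUT).
  have ltTU : #|T :\: U| < m.
    rewrite cardsDS //; move: U0 (subset_leq_card sUT) leTm; rewrite -card_gt0; lia.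
  have [g2 hg2] := IH _ ltTU _ (hall_cond_contract hT sUT tightU).
  exists (fun a => if a \in U then g1 a else g2 a); rewrite -(setID T U) (setIidPr sUT).
  by apply: assignment_glue hg1 hg2 _ => i; case: ifP; rewrite ?addn0.
have [-> | [a aT]] := set_0Vmem T; first by exists (fun _ => i0); exact: assignment0.
have [i iVa kap_i] : exists2 i, i \in V a & 0 < kap i.
  have := hT [set a]; rewrite sub1set aT cards1 /nbhd big_set1 => /(_ isT).
  rewrite lt0n sum_nat_eq0 => /forall_inPn[i iVa kap_i]; exists i => //.
  by rewrite lt0n.
have looseT U : U != set0 -> U \proper T -> #|U| != \sum_(j in nbhd U) kap j.
  by move=> U0 ltUT; have := loose U; rewrite U0 ltUT.
have ltTa : #|T :\ a| < m by rewrite (cardsD1 a T) aT in leTm.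
have [g hg] := IH _ ltTa _ (hall_cond_remove i hT looseT aT).
exists (fun b => if b \in [set a] then i else g b); rewrite -(setD1K aT).
apply: assignment_glue (assignment1 iVa) hg _ => j.
by case: eqP => [-> | _]; rewrite ?subnKC ?add0n ?subn0.
Qed.

End CapacitatedHall.

Section AlgebraicDependence.
Variable R : fieldType.
Local Open Scope ring_scope.

Lemma msizeM_deg_le N (p q : {mpoly R[N]}) e1 e2 :
  (msize p <= e1.+1 -> msize q <= e2.+1 -> msize (p * q) <= (e1 + e2).+1)%N.
Proof.
have [-> | p0] := eqVneq p 0; first by rewrite mul0r msize0.
have [-> | q0] := eqVneq q 0; first by rewrite mulr0 msize0.
by move=> hp hq; rewrite msizeM // -subn1 leq_subLR add1n -addnS -addSn leq_add.
Qed.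

Lemma msize_prod_le N (J : Type) (s : seq J) (P : pred J) (F : J -> {mpoly R[N]}) (e : J -> nat) :
  (forall j, P j -> msize (F j) <= (e j).+1)%N ->
  (msize (\prod_(j <- s | P j) F j) <= (\sum_(j <- s | P j) e j).+1)%N.
Proof.
move=> hF; elim/big_rec2: _ => [|j k p Pj hp]; first by rewrite msize1.
exact: msizeM_deg_le (hF j Pj) hp.
Qed.

Lemma msizeX_le N (p : {mpoly R[N]}) e k :
  (msize p <= e.+1 -> msize (p ^+ k) <= (k * e).+1)%N.
Proof.
move=> hp; rewrite -[k]card_ord -prodr_const -sum_nat_const.
by apply: msize_prod_le => i _.
Qed.

Lemma msize_sum_le N (J : Type) (s : seq J) (P : pred J) (F : J -> {mpoly R[N]}) b :
  (forall j, P j -> msize (F j) <= b)%N -> (msize (\sum_(j <- s | P j) F j) <= b)%N.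
Proof.
move=> hF; elim/big_rec: _ => [|j p Pj hp]; first by rewrite msize0.
by rewrite (leq_trans (msizeD_le _ _)) // geq_max hF.
Qed.

Lemma card_bmultinom_le N b : (#|{: 'X_{1..N < b}}| <= b ^ N)%N.
Proof.
have lt_b (m : 'X_{1..N < b}) i : (m i < b)%N.
  by apply: leq_ltn_trans (bmdeg m); rewrite mdegE (bigD1 i) //= leq_addr.
pose f m : {ffun 'I_N -> 'I_b} := [ffun i => Ordinal (lt_b m i)].
have f_inj : injective f.
  move=> m1 m2 /ffunP f12; apply/val_inj/mnmP=> i.
  by have /(congr1 val) := f12 i; rewrite !ffunE.
by have := leq_card f f_inj; rewrite card_ffun !card_ord.
Qed.

Lemma exists_pow_gap N w e : (N < w)%N -> exists D, ((w * D * e).+1 ^ N < D ^ w)%N.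
Proof.
move=> ltNw; pose D := ((w * e).+1 ^ N).+1; exists D.
have D0 : (0 < D)%N by [].
have ltD : ((w * e).+1 ^ N < D)%N by [].
clearbody D; apply: (@leq_ltn_trans ((D * (w * e).+1) ^ N)).
  by have [-> // | N0] := posnP N; rewrite leq_exp2r //; nia.
apply: (@leq_trans (D ^ N.+1)); first by rewrite expnMn expnSr ltn_pmul2l ?expn_gt0 ?D0.
exact: leq_pexp2l.
Qed.

Lemma exists_linear_relation (J K : finType) (F : J -> K -> R) : (#|K| < #|J|)%N ->
  exists2 u : J -> R, (exists j, u j != 0) & forall k, \sum_j u j * F j k = 0.
Proof.
move=> ltKJ; pose M : 'M_(#|J|, #|K|) := \matrix_(r, c) F (enum_val r) (enum_val c).
have : kermx M != 0.
  by rewrite kermx_eq0 -row_leq_rank -ltnNge (leq_ltn_trans (rank_leq_col M)).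
case/matrix0Pn=> r [c nz]; pose w := row r (kermx M).
have wM : w *m M = 0 by rewrite -row_mul mulmx_ker row0.
exists (fun j => w 0 (enum_rank j)); first by exists (enum_val c); rewrite enum_valK mxE.
move=> k; rewrite (reindex (fun r : 'I_#|J| => enum_val r)) /=; last exact/onW_bij/enum_val_bij.
have := congr1 (fun X : 'M_(1, #|K|) => X 0 (enum_rank k)) wM; rewrite !mxE => wMk.
rewrite -[RHS]wMk.
by apply: eq_bigr => i _; rewrite enum_valK !mxE enum_rankK.
Qed.

Lemma exists_mpoly_exponent_sum m w D (f : 'I_w -> 'I_m) (u : {ffun 'I_w -> 'I_D} -> R) :
  injective f -> (exists k, u k != 0) ->
  exists2 P : {mpoly R[m]}, P != 0 &
    forall z, P.@[z] = \sum_k u k * \prod_(t < w) z (f t) ^+ k t.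
Proof.
move=> f_inj [k0 uk0].
pose mon (k : {ffun 'I_w -> 'I_D}) := (\sum_(t < w) U_(f t) *+ k t)%MM.
have monE k t : mon k (f t) = k t.
  rewrite mnm_sumE (bigD1 t) //= mulmnE mnm1E eqxx mul1n big1 ?addn0 // => t' ne.
  by rewrite mulmnE mnm1E (inj_eq f_inj) (negPf ne).
have mon_inj : injective mon.
  by move=> k1 k2 eq12; apply/ffunP=> t; apply/val_inj; rewrite /= -!monE eq12.
have XmonE k : 'X_[mon k] = \prod_(t < w) 'X_(f t) ^+ k t :> {mpoly R[m]}.
  by rewrite /mon; elim/big_rec2: _ => [|t mm p _ <-]; rewrite ?mpolyX0 // mpolyXD mpolyXn.
exists (\sum_k u k *: 'X_[mon k]).
  apply: contraNneq uk0 => /(congr1 (mcoeff (mon k0))); rewrite mcoeff0 raddf_sum /=.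
  rewrite (bigD1 k0) //= mcoeffZ mcoeffX eqxx mulr1 big1 ?addr0 => [-> // | k ne].
  by rewrite mcoeffZ mcoeffX (inj_eq mon_inj) (negPf ne) mulr0.
move=> z; rewrite raddf_sum; apply: eq_bigr => k _; rewrite /= mevalZ XmonE rmorph_prod.
by congr (_ * _); apply: eq_bigr => t _; rewrite rmorphXn /= mevalXU.
Qed.

Lemma exists_annihilating_mpoly m N e (W : {set 'I_m}) (h : 'I_m -> {mpoly R[N]}) :
  (N < #|W|)%N -> {in W, forall i, msize (h i) <= e.+1}%N ->
  exists2 P : {mpoly R[m]}, P != 0 &
    forall v z, {in W, forall i, z i = (h i).@[v]} -> P.@[z] = 0.
Proof.
move=> ltNW hdeg; set w := #|W|.
have [D gapD] := exists_pow_gap e ltNW.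
pose Q (k : {ffun 'I_w -> 'I_D}) := \prod_(t < w) h (enum_val t) ^+ k t.
pose B := (w * D * e).+1.
have sizeQ k : (msize (Q k) <= B)%N.
  apply: leq_trans (msize_prod_le _ (e := fun t => k t * e)%N _) _.
    by move=> t _; apply/msizeX_le/hdeg/enum_valP.
  rewrite ltnS -mulnA -[w in (w * _)%N]card_ord -sum_nat_const.
  by apply: leq_sum => t _; rewrite leq_mul2r ltnW ?orbT.
(* The [D ^ w] polynomials [Q k] have degree < [B], and there are fewer monomials of
   degree < [B] than that: a linear relation among the [Q k] is an annihilating polynomial. *)
have ltBD : (#|{: 'X_{1..N < B}}| < #|{: {ffun 'I_w -> 'I_D}}|)%N.
  by rewrite (leq_ltn_trans (card_bmultinom_le N B)) // card_ffun !card_ord.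
have [u u_nz urel] := exists_linear_relation (fun k c => (Q k)@_(bmnm c)) ltBD.
have sumQ0 : \sum_k u k *: Q k = 0.
  rewrite [LHS](mpolywE (k := B)); last first.
    by apply: msize_sum_le => k _; rewrite (leq_trans (msizeZ_le _ _)).
  apply: big1 => c _; rewrite raddf_sum /=.
  by under eq_bigr do rewrite mcoeffZ; rewrite urel scale0r.
have [P P0 evalP] := exists_mpoly_exponent_sum (@enum_val_inj _ W) u_nz.
exists P => // v z hz; rewrite evalP.
transitivity (\sum_k u k *: Q k).@[v]; last by rewrite sumQ0 rmorph0.
rewrite raddf_sum; apply: eq_bigr => k _; rewrite /= mevalZ rmorph_prod /=; congr (_ * _).
by apply: eq_bigr => t _; rewrite rmorphXn /= hz ?enum_valP.
Qed.

End AlgebraicDependence.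

Section IndexVectors.
Local Open Scope nat_scope.
Variables n d : nat.
Implicit Types (a l : idxvec n d) (S : {set 'I_d}).

Definition entries a : seq nat := [seq (a k : nat) | k <- enum 'I_n].

Definition parts a : {set 'I_d} := [set i : 'I_d | [exists k, i.+1 == a k]].

Lemma meets_parts a S i : i \in parts a -> i \in S -> meets a S.
Proof.
rewrite inE => /existsP[k ik] iS; apply/existsP; exists k; apply/existsP; exists i.
by rewrite iS.
Qed.

Lemma meetsE a S : meets a S = has (fun v => [exists i in S, i.+1 == v]) (entries a).
Proof.
apply/existsP/hasP => [[k ak] | [_ /mapP[k _ ->] ak]]; last by exists k.
by exists (a k : nat); first exact/map_f/mem_enum.
Qed.

Lemma nonzero_entriesE a : nonzero_entries a = [seq v <- entries a | v != 0].
Proof. by rewrite /nonzero_entries /entries [RHS]filter_map; congr (map _ _); exact: eq_filter. Qed.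

Lemma size_entries a : size (entries a) = n.
Proof. by rewrite size_map size_enum_ord. Qed.

Lemma sum_entries a : \sum_(k < n) (a k : nat) = sumn (entries a).
Proof. by rewrite sumnE big_map big_enum. Qed.

Lemma nth_sort_entries_lt a i : nth 0 (sort geq (entries a)) i < d.+1.
Proof.
have [lt_i | ge_i] := ltnP i (size (sort geq (entries a))); last by rewrite nth_default.
have /mapP[k _ ->] : nth 0 (sort geq (entries a)) i \in entries a.
  by rewrite -(mem_sort geq) mem_nth.
exact: ltn_ord.
Qed.

Definition partition_of a : idxvec n d :=
  [ffun k : 'I_n => inord (nth 0 (sort geq (entries a)) k)].

Lemma entries_partition_of a : entries (partition_of a) = sort geq (entries a).
Proof.
apply: (@eq_from_nth _ 0); first by rewrite size_sort !size_entries.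
move=> i; rewrite size_entries => lt_in.
rewrite (nth_map (Ordinal lt_in)) ?size_enum_ord // ffunE nth_enum_ord //.
by rewrite inordK ?nth_sort_entries_lt.
Qed.

Lemma partition_of_partition a : is_index a -> is_partition (partition_of a).
Proof.
rewrite /is_partition /is_index !sum_entries entries_partition_of => sum_a.
rewrite (perm_sumn (permEl (perm_sort geq _))) sum_a /=.
apply/forallP=> k; apply/forallP=> k'; apply/implyP=> le_kk'.
have := sorted_leq_nth (rev_trans leq_trans) (fun x => leqnn x) 0
  (sort_sorted (fun x y => leq_total y x) (entries a)) k k'.
rewrite !inE size_sort size_entries !ltn_ord => /(_ isT isT le_kk').
by rewrite !ffunE !inordK ?nth_sort_entries_lt.
Qed.

Lemma perm_entries_partition_of a : perm_eq (entries (partition_of a)) (entries a).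
Proof. by rewrite entries_partition_of perm_sort. Qed.

Lemma mem_Nset_partition_of a : a \in Nset (partition_of a).
Proof.
by rewrite inE !nonzero_entriesE; apply: perm_filter; rewrite perm_sym perm_entries_partition_of.
Qed.

Lemma meets_partition_of a S : meets (partition_of a) S = meets a S.
Proof. by rewrite !meetsE (perm_has _ (perm_entries_partition_of a)). Qed.

Lemma card_meets_le S : #|[set a in coords n d | meets a S]| <=
  \sum_(l : idxvec n d | is_partition l && meets l S) #|Nset l|.
Proof.
rewrite -sum1_card (partition_big partition_of (fun l => is_partition l && meets l S)) /=.
  apply: leq_sum => l _; rewrite -sum1_card big_mkcond [leqRHS]big_mkcond /=.
  apply: leq_sum => a _; case: ifP => // /andP[_ /eqP <-].
  by rewrite mem_Nset_partition_of.
move=> a; rewrite !inE => /andP[a_idx a_meets].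
by rewrite partition_of_partition ?meets_partition_of.
Qed.

End IndexVectors.

Section CoordinatePolynomials.
Local Open Scope ring_scope.
Variables (C : numClosedFieldType) (n d r : nat) (Vs : {set 'I_d}).

Local Notation var := {p : 'I_r * 'I_n * 'I_d | p.2 \in Vs}.
Local Notation nvar := #|{: var}|.

Lemma card_var : nvar = (n * r * #|Vs|)%N.
Proof.
rewrite card_sig (eq_card (B := setX [set: 'I_r * 'I_n] Vs)) => [|[p i]]; last by rewrite !inE.
by rewrite cardsX cardsT card_prod !card_ord [(r * n)%N]mulnC.
Qed.

(* The variable of [(j, k, i)] stands for mu^{(j)}_{k,i+1}; the parameters whose part
   i+1 lies outside [Vs] are replaced by 0. *)
Definition mu_mpoly (j : 'I_r) (k : 'I_n) (i : 'I_d.+1) : {mpoly C[nvar]} :=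
  if unlift ord0 i is Some i' then
    if insub (j, k, i') : option var is Some p then 'X_(enum_rank p) else 0
  else 1.

Definition mcoord_mpoly (a : idxvec n d) : {mpoly C[nvar]} :=
  \sum_(j < r) \prod_(k < n) mu_mpoly j k (a k).

Definition restrict_params (x : params C r n d) (t : 'I_nvar) : C :=
  let: (j, k, i) := val (enum_val t) in x j k (lift ord0 i).

Lemma msize_mcoord_mpoly a : (msize (mcoord_mpoly a) <= n.+1)%N.
Proof.
apply: msize_sum_le => j _.
have -> : n.+1 = (\sum_(k < n) 1).+1 by rewrite sum_nat_const card_ord muln1.
apply: msize_prod_le => k _; rewrite /mu_mpoly.
case: unlift => [i|]; last by rewrite msize1.
by case: insub => [p|]; rewrite ?msize0 // msizeX mdeg1.
Qed.

Lemma meval_mcoord_mpoly a x : parts a \subset Vs ->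
  (mcoord_mpoly a).@[restrict_params x] = mcoord a x.
Proof.
move=> a_Vs; rewrite raddf_sum; apply: eq_bigr => j _; rewrite /= rmorph_prod.
apply: eq_bigr => k _; rewrite /mu_mpoly /mu; case: unliftP => [i a_k | ->]; last first.
  by rewrite eqxx rmorph1.
have i_Vs : i \in Vs.
  by apply: (subsetP a_Vs); rewrite inE; apply/existsP; exists k; rewrite a_k.
rewrite a_k eq_sym (negPf (neq_lift _ _)) (insubT _ (x := (j, k, i)) i_Vs).
by rewrite /= mevalXU /restrict_params enum_rankK.
Qed.

End CoordinatePolynomials.

Section Feasibility.
Variables (C : numClosedFieldType) (n d r : nat).

Lemma alg_indep_card_le (T U : {set idxvec n d}) : @alg_indep C r n d T -> U \subset T ->
  (#|U| <= n * r * #|nbhd (@parts n d) U|)%N.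
Proof.
move=> indT sUT; have [-> | [a0 a0U]] := set_0Vmem U; first by rewrite cards0.
set Vs := nbhd (@parts n d) U; rewrite leqNgt; apply/negP=> ltU.
pose W := [set t : 'I_#|T| | enum_val t \in U].
have cardW : #|W| = #|U|.
  apply: on_card_preimset; apply: subon_bij (enum_val_bij_in (subsetP sUT a0 a0U)).
  exact/subsetP.
have ltVW : (#|{: {p : 'I_r * 'I_n * 'I_d | p.2 \in Vs}}| < #|W|)%N.
  by rewrite card_var cardW.
have [P P0 annP] := exists_annihilating_mpoly
  (h := fun t : 'I_#|T| => mcoord_mpoly C r Vs (enum_val t)) ltVW
  (fun t _ => msize_mcoord_mpoly _ _ _ _).
move/negP: P0; apply; apply/eqP/indT => x; apply: (annP (restrict_params (Vs := Vs) x)) => t.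
rewrite inE => tU; rewrite meval_mcoord_mpoly //.
exact: bigcup_sup.
Qed.

Lemma hall_cond_alg_indep (T : {set idxvec n d}) : @alg_indep C r n d T ->
  hall_cond (@parts n d) (fun=> (n * r)%N) T.
Proof.
move=> indT U sUT; rewrite sum_nat_const [(#|_| * _)%N]mulnC.
exact: (alg_indep_card_le indT sUT).
Qed.

End Feasibility.

Lemma sum_card_fibers (A I : finType) (T : {set A}) (g : A -> I) (P : pred I) :
  (\sum_(i | P i) #|[set a in T | g a == i]| = #|[set a in T | P (g a)]|)%N.
Proof.
rewrite -sum1_card (partition_big g P) => [|a]; last by rewrite inE => /andP[].
apply: eq_bigr => i Pi; rewrite -sum1_card; apply: eq_bigl => a; rewrite !inE.
by case: eqP => [-> | _]; rewrite ?Pi ?andbT ?andbF.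
Qed.

Lemma ilp_feasible_assignment n d r (T : {set idxvec n d}) g :
  T \subset coords n d -> assignment (@parts n d) (fun=> (n * r)%N) T g ->
  exists c, @ilp_feasible n d r c && (\sum_(i < d) (c i : nat) == #|T|)%N.
Proof.
move=> sT_coords [gV g_cap].
pose c := [ffun i => Ordinal (g_cap i : (_ < (n * r).+1)%N)].
have cE i : (c i : nat) = #|[set a in T | g a == i]| by rewrite ffunE.
exists c; apply/andP; split; last first.
  rewrite (eq_bigr _ (fun i _ => cE i)) (sum_card_fibers _ _ xpredT).
  by apply/eqP/eq_card=> a; rewrite !inE andbT.
apply/forallP=> S; rewrite (eq_bigr _ (fun i _ => cE i)) (sum_card_fibers _ _ (mem S)).
apply: leq_trans (card_meets_le n S); apply/subset_leq_card/subsetP=> a.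
rewrite !inE => /andP[aT gaS]; have := subsetP sT_coords a aT; rewrite inE => ->.
exact: meets_parts (gV a aT) gaS.
Qed.

Local Open Scope ring_scope.

Theorem theorem5p3 (C : numClosedFieldType) (n d r : nat) :
  (0 < n)%N -> (0 < d)%N -> (0 < r)%N ->
  sigma_dim C n d r <= ilp_opt n d r.
Proof.
(* [0 < d] only supplies a default part. *)
move=> _ d_gt0 _; rewrite /sigma_dim /ilp_opt lerD2r lez_nat.
apply/bigmax_leqP => T /andP[sT_coords]; rewrite /alg_indepb.
case: excluded_middle_informative => // indT _.
have [g hg] := capacitated_hall (Ordinal d_gt0) (hall_cond_alg_indep indT).
have [c /andP[c_feas /eqP <-]] := ilp_feasible_assignment sT_coords hg.
exact: leq_bigmax_cond c c_feas.
Qed.
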